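(* Let $\mathbf{c}=\mathbf{a}+\mathbf{b}$. For every homogeneous polynomial $w\in\mathbb{Z}\langle \mathbf{a},\mathbf{b}\rangle$ of degree $n$ the following identities hold in $\mathbb{Z}[q]$: \begin{align*} \Theta(w\cdot \mathbf{c}) &= (1+q^{n+1})\cdot\Theta(w),\\ \Theta(G(w)) &= q\cdot [n]\cdot \Theta(w),\\ \Theta(\mathrm{Pyr}(w)) &= [n+2]\cdot\Theta(w),\\ \Theta(\mathrm{Bipyr}(w)) &= [2]\cdot[n+1]\cdot\Theta(w). \end{align*}
   Context: $\mathbb{Z}\langle \mathbf{a},\mathbf{b}\rangle$ is the ring of polynomials in the non-commuting variables $\mathbf{a},\mathbf{b}$. The Major MacMahon map $\Theta:\mathbb{Z}\langle \mathbf{a},\mathbf{b}\rangle\to\mathbb{Z}[q]$ is the $\mathbb{Z}$-linear map defined on monomials $w=u_1u_2\cdots u_n$ (each $u_i\in\{\mathbf{a},\mathbf{b}\}$) by $\Theta(w)=\prod_{i:\,u_i=\mathbf{b}} q^{i}$ (so $\Theta(1)=1$). For $m\ge 0$, $[m]=1+q+\cdots+q^{m-1}$ (so $[0]=0$). $G$ and $D$ are the derivations of $\mathbb{Z}\langle \mathbf{a},\mathbf{b}\rangle$ (linear maps satisfying $X(uv)=X(u)v+uX(v)$) determined by $G(\mathbf{a})=\mathbf{b}\mathbf{a}$, $G(\mathbf{b})=\mathbf{a}\mathbf{b}$, $D(\mathbf{a})=D(\mathbf{b})=\mathbf{a}\mathbf{b}+\mathbf{b}\mathbf{a}$, and $G(1)=D(1)=0$.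 The pyramid and bipyramid operators are the linear maps $\mathrm{Pyr}(w)=G(w)+w\cdot\mathbf{c}$ and $\mathrm{Bipyr}(w)=D(w)+\mathbf{c}\cdot w$. *)

From HB Require Import structures.
From mathcomp Require Import all_boot all_order all_algebra.
From mathcomp Require Import finmap monalg.
Set Implicit Arguments. Unset Strict Implicit. Unset Printing Implicit Defensive.
Import GRing.Theory.
Local Open Scope ring_scope.

(* Letters: a is encoded as [false], b as [true].
   ZAB = Z<a,b> is the monoid algebra {malg int[{fmonom bool}]}
   (non-commutative polynomials in a, b with integer coefficients). *)
Definition ZAB := {malg int[{fmonom bool}]}.

Definition mon (s : seq bool) : ZAB := << FMonom s >>.

Definition va : ZAB := mon [:: false].
Definition vb : ZAB := mon [:: true].
Definition vc : ZAB := va + vb.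

Definition theta_word (m : {fmonom bool}) : {poly int} :=
  \prod_(i < size m | nth false m i) 'X^(i.+1).

Definition Theta (w : ZAB) : {poly int} :=
  \sum_(k <- msupp w) (w@_k)%:P * theta_word k.

Definition qint (m : nat) : {poly int} := \sum_(i < m) 'X^i.

(* The derivation X with X(letter x) = f x, on a word u_1...u_n:
   X(u_1...u_n) = sum_i u_1...u_(i-1) X(u_i) u_(i+1)...u_n  (Leibniz rule),
   extended Z-linearly; this is the unique derivation with these values. *)
Definition der_word (f : bool -> ZAB) (m : {fmonom bool}) : ZAB :=
  \sum_(i < size m) mon (take i m) * f (nth false m i) * mon (drop i.+1 m).

Definition der (f : bool -> ZAB) (w : ZAB) : ZAB :=
  \sum_(k <- msupp w) w@_k *: der_word f k.

Definition Gder : ZAB -> ZAB := der (fun x => if x then va * vb else vb * va).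
Definition Dder : ZAB -> ZAB := der (fun _ => va * vb + vb * va).

Definition Pyr (w : ZAB) : ZAB := Gder w + w * vc.
Definition Bipyr (w : ZAB) : ZAB := Dder w + vc * w.

Definition homogeneous (n : nat) (w : ZAB) : Prop :=
  forall k : {fmonom bool}, k \in msupp w -> size k = n.

(* Theta is additive, and appending a letter to a word of length n multiplies its
   weight by 1 (for a) or by q^(n+1) (for b).  Since G, D and left multiplication by c
   are determined by their values on words, each identity only has to be checked on a
   single word u.  This is done by appending one letter at a time, using the Leibniz
   rule X(u x) = X(u) x + u X(x): the new terms are explicit monomials, and everything
   reduces to [n+1] = [n] + q^n = 1 + q [n].  Neither D(u) nor c u alone has weight
   proportional to Theta(u), so for Bipyr the two are carried through the induction
   together. *)

From HB Require Import structures.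
From mathcomp Require Import all_boot all_order all_algebra.
From mathcomp Require Import finmap monalg.
From mathcomp Require Import ring.
Local Open Scope ring_scope.
Import GRing.Theory.

HB.instance Definition _ :=
  GRing.Additive.copy Theta (mmap (@polyC int) theta_word).

Lemma Theta_scale (c : int) (w : ZAB) : Theta (c *: w) = c%:P * Theta w.
Proof.
rewrite [LHS](mmapEw (msuppZ_le c w)) big_distrr /=.
by apply: eq_bigr => k _; rewrite mcoeffZ polyCM mulrA.
Qed.

Lemma mon_nil : mon [::] = 1.
Proof. by apply/malgP => k; rewrite mcoeff1 /mon -fmoneE mcoeffU1 eq_sym. Qed.

Lemma mon_cat (s t : seq bool) : mon s * mon t = mon (s ++ t).
Proof. by rewrite /mon malgM_def fgmulUU mulr1; congr << _ >>; apply: val_inj; rewrite /= fmM. Qed.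

Lemma monalgU_mon (c : int) (k : {fmonom bool}) : << c *g k >> = c *: mon k.
Proof. by apply/malgP => k'; rewrite mcoeffZ /mon fmK mcoeffU1 mcoeffU mulr_natr. Qed.

Lemma scalerAr_int (c : int) (x y : ZAB) : c *: (x * y) = x * (c *: y).
Proof. by rewrite -[c]intz !scaler_int mulrzAr. Qed.

Lemma Theta_mon (s : seq bool) : Theta (mon s) = theta_word (FMonom s).
Proof. by rewrite /Theta /mon msuppU1 big_seq_fset1 mcoeffU1 eqxx mul1r. Qed.

(* The weight of letter [x] at 0-based position [i], i.e. at position [i+1] of the word. *)
Definition theta_letter (i : nat) (x : bool) : {poly int} := if x then 'X^(i.+1) else 1.

Lemma theta_letter_a i : theta_letter i false = 1. Proof. by []. Qed.

Lemma theta_letter_b i : theta_letter i true = 'X^(i.+1). Proof. by []. Qed.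

Lemma theta_word_nil : theta_word (FMonom [::]) = 1.
Proof. by rewrite /theta_word big_ord0. Qed.

Lemma theta_word_rcons (s : seq bool) (x : bool) :
  theta_word (FMonom (rcons s x)) = theta_word (FMonom s) * theta_letter (size s) x.
Proof.
rewrite /theta_word /= size_rcons big_mkcond big_ord_recr /= nth_rcons ltnn eqxx.
rewrite [in RHS]big_mkcond; congr (_ * _).
by apply: eq_bigr => i _; rewrite nth_rcons ltn_ord.
Qed.

Lemma monalgE_mon (w : ZAB) : w = \sum_(k <- msupp w) w@_k *: mon k.
Proof. by rewrite {1}[w]monalgE; apply: eq_bigr => k _; rewrite monalgU_mon. Qed.

Lemma homogeneousD n (u v : ZAB) :
  homogeneous n u -> homogeneous n v -> homogeneous n (u + v).
Proof. by move=> hu hv k /(fsubsetP (msuppD_le u v)); rewrite inE => /orP[/hu|/hv]. Qed.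

Lemma homogeneous_sum n (I : Type) (r : seq I) (P : pred I) (F : I -> ZAB) :
  (forall i, P i -> homogeneous n (F i)) -> homogeneous n (\sum_(i <- r | P i) F i).
Proof.
move=> hF; apply: big_ind => //; last exact: homogeneousD.
by move=> k; rewrite msupp0.
Qed.

Lemma homogeneous_monalgU (c : int) (k : {fmonom bool}) : homogeneous (size k) << c *g k >>.
Proof. by move=> k' /(fsubsetP msuppU_le); rewrite inE => /eqP ->. Qed.

Lemma homogeneous_mon (s : seq bool) : homogeneous (size s) (mon s).
Proof. exact: homogeneous_monalgU. Qed.

Lemma homogeneousM m n (u v : ZAB) :
  homogeneous m u -> homogeneous n v -> homogeneous (m + n) (u * v).
Proof.
move=> hu hv; rewrite malgME big_seq; apply: homogeneous_sum => k1 k1u.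
rewrite big_seq; apply: homogeneous_sum => k2 k2v.
have -> : (m + n)%N = size (mmul k1 k2) by rewrite fmM size_cat (hu _ k1u) (hv _ k2v).
exact: homogeneous_monalgU.
Qed.

Lemma Theta_mulr_letter n (w : ZAB) (x : bool) : homogeneous n w ->
  Theta (w * mon [:: x]) = Theta w * theta_letter n x.
Proof.
move=> hw; rewrite {1}[w]monalgE_mon mulr_suml raddf_sum /= big_distrl /=.
rewrite !big_seq; apply: eq_bigr => k kw.
by rewrite -scalerAl mon_cat Theta_scale Theta_mon cats1 theta_word_rcons (hw _ kw) fmK mulrA.
Qed.

Lemma leibniz_sum_rcons (R : pzRingType) (T : Type) (x0 : T) (M : seq T -> R)
    (F : T -> R) (s : seq T) (x : T) :
  M [::] = 1 -> {morph M : u v / u ++ v >-> u * v} ->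
  \sum_(i < size (rcons s x))
     M (take i (rcons s x)) * F (nth x0 (rcons s x) i) * M (drop i.+1 (rcons s x))
  = (\sum_(i < size s) M (take i s) * F (nth x0 s i) * M (drop i.+1 s)) * M [:: x]
    + M s * F x.
Proof.
move=> M0 Mcat; rewrite size_rcons big_ord_recr /= nth_rcons ltnn eqxx.
rewrite -[in take _ _]cats1 take_size_cat // drop_oversize ?size_rcons // M0 mulr1.
rewrite mulr_suml; congr (_ + _); apply: eq_bigr => i _.
rewrite drop_rcons // -cats1 takel_cat ?(ltnW (ltn_ord i)) // nth_cat ltn_ord.
by rewrite -cats1 Mcat mulrA.
Qed.

Lemma der_word_rcons (f : bool -> ZAB) (s : seq bool) (x : bool) :
  der_word f (FMonom (rcons s x)) = der_word f (FMonom s) * mon [:: x] + mon s * f x.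
Proof. exact: leibniz_sum_rcons mon_nil (fun u v => esym (mon_cat u v)). Qed.

Lemma homogeneous_der_word (f : bool -> ZAB) (s : seq bool) :
  (forall x, homogeneous 2 (f x)) -> homogeneous (size s).+1 (der_word f (FMonom s)).
Proof.
move=> hf; elim/last_ind: s => [|s x IH]; first by rewrite /der_word big_ord0 => k; rewrite msupp0.
rewrite der_word_rcons size_rcons; apply: homogeneousD.
- by rewrite -addn1; apply: homogeneousM IH (homogeneous_mon _).
- by rewrite -addn2; apply: homogeneousM (homogeneous_mon _) (hf x).
Qed.

Definition monomial_linear (T : ZAB -> ZAB) : Prop :=
  forall w, T w = \sum_(k <- msupp w) w@_k *: T (mon k).

Lemma der_mon (f : bool -> ZAB) (s : seq bool) : der f (mon s) = der_word f (FMonom s).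
Proof. by rewrite /der /mon msuppU1 big_seq_fset1 mcoeffU1 eqxx scale1r. Qed.

Lemma monomial_linear_der (f : bool -> ZAB) : monomial_linear (der f).
Proof. by move=> w; apply: eq_bigr => k _; rewrite der_mon fmK. Qed.

Lemma monomial_linear_mull (x : ZAB) : monomial_linear (fun w => x * w).
Proof.
move=> w; rewrite {1}[w]monalgE_mon mulr_sumr.
by apply: eq_bigr => k _; rewrite scalerAr_int.
Qed.

Lemma monomial_linearD (T1 T2 : ZAB -> ZAB) :
  monomial_linear T1 -> monomial_linear T2 -> monomial_linear (fun w => T1 w + T2 w).
Proof.
move=> h1 h2 w; rewrite h1 h2 -big_split.
by apply: eq_bigr => k _; rewrite scalerDr.
Qed.

Lemma Theta_monomial_linear (T : ZAB -> ZAB) (p : {poly int}) n (w : ZAB) :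
  monomial_linear T -> homogeneous n w ->
  (forall s : seq bool, size s = n -> Theta (T (mon s)) = p * Theta (mon s)) ->
  Theta (T w) = p * Theta w.
Proof.
move=> hT hw hs; rewrite hT [in RHS](monalgE_mon w) !raddf_sum big_distrr /=.
rewrite !big_seq; apply: eq_bigr => k kw.
by rewrite !Theta_scale hs ?(hw _ kw) // mulrCA.
Qed.

Lemma qint0 : qint 0 = 0.
Proof. by rewrite /qint big_ord0. Qed.

Lemma qint2 : qint 2 = 1 + 'X.
Proof. by rewrite /qint !big_ord_recr big_ord0 /= add0r expr0 expr1. Qed.

Lemma qintSr n : qint n.+1 = qint n + 'X^n.
Proof. by rewrite /qint big_ord_recr. Qed.

Lemma qintSl n : qint n.+1 = 1 + 'X * qint n.
Proof.
rewrite /qint big_ord_recl expr0 big_distrr /=.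
by congr (_ + _); apply: eq_bigr => i _; rewrite exprS.
Qed.

Lemma Theta_mon_rcons (s : seq bool) (x : bool) :
  Theta (mon (rcons s x)) = Theta (mon s) * theta_letter (size s) x.
Proof. by rewrite !Theta_mon theta_word_rcons. Qed.

Lemma Theta_mon_letter (x : bool) : Theta (mon [:: x]) = theta_letter 0 x.
Proof. by rewrite (Theta_mon_rcons [::]) Theta_mon theta_word_nil mul1r. Qed.

Lemma Theta_mon_mul_letter2 (s : seq bool) (y z : bool) :
  Theta (mon s * (mon [:: y] * mon [:: z])) =
  Theta (mon s) * theta_letter (size s) y * theta_letter (size s).+1 z.
Proof. by rewrite !mon_cat catA !cats1 !Theta_mon_rcons size_rcons. Qed.

Lemma homogeneous_mon2 (y z : bool) : homogeneous 2 (mon [:: y] * mon [:: z]).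
Proof. exact: homogeneousM (homogeneous_mon [:: y]) (homogeneous_mon [:: z]). Qed.

Lemma homogeneous_vc : homogeneous 1 vc.
Proof. exact: homogeneousD (homogeneous_mon [:: false]) (homogeneous_mon [:: true]). Qed.

Lemma Theta_mulr_vc n (w : ZAB) : homogeneous n w ->
  Theta (w * vc) = (1 + 'X^(n.+1)) * Theta w.
Proof.
move=> hw; rewrite /vc /va /vb mulrDr raddfD /=.
(* The occurrence patterns stop [rewrite] from testing the other [Theta] subterms
   for convertibility, which unfolds products in the monoid algebra and is very slow. *)
rewrite [X in X + _](Theta_mulr_letter _ _ false hw).
rewrite [X in _ + X](Theta_mulr_letter _ _ true hw).
by rewrite theta_letter_a theta_letter_b -mulrDr mulrC.
Qed.

Lemma Theta_Gder_mon (s : seq bool) :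
  Theta (Gder (mon s)) = 'X * qint (size s) * Theta (mon s).
Proof.
rewrite /Gder der_mon; elim/last_ind: s => [|s x IH].
  by rewrite /der_word big_ord0 raddf0 qint0 mulr0 mul0r.
have hG y : homogeneous 2 (if y then va * vb else vb * va) by case: y; apply: homogeneous_mon2.
rewrite der_word_rcons raddfD /=.
rewrite [X in X + _](Theta_mulr_letter _ _ _ (homogeneous_der_word _ _ hG)).
rewrite [X in X * _ + _]IH [in RHS]Theta_mon_rcons size_rcons.
case: x; rewrite [X in _ + X]Theta_mon_mul_letter2 ?theta_letter_a ?theta_letter_b.
- by rewrite qintSl !exprS; ring.
- by rewrite qintSr !exprS; ring.
Qed.

Lemma Theta_mon_mul_ab_ba (s : seq bool) :
  Theta (mon s * (va * vb + vb * va)) =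
  Theta (mon s) * (theta_letter (size s) false * theta_letter (size s).+1 true
                   + theta_letter (size s) true * theta_letter (size s).+1 false).
Proof.
rewrite mulrDr raddfD /= [X in X + _]Theta_mon_mul_letter2 [X in _ + X]Theta_mon_mul_letter2.
by rewrite mulrDr !mulrA.
Qed.

Lemma Theta_Bipyr_mon (s : seq bool) :
  Theta (Bipyr (mon s)) = qint 2 * qint (size s).+1 * Theta (mon s).
Proof.
rewrite /Bipyr /Dder der_mon; elim/last_ind: s => [|s x IH].
  rewrite /der_word big_ord0 add0r [in LHS]mon_nil mulr1 /vc /va /vb raddfD /=.
  rewrite [X in X + _]Theta_mon_letter [X in _ + X]Theta_mon_letter.
  rewrite theta_letter_a theta_letter_b Theta_mon theta_word_nil qint2.
  by rewrite /qint big_ord1 expr0 !mulr1 expr1.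
have hD (_ : bool) : homogeneous 2 (va * vb + vb * va).
  exact: homogeneousD (homogeneous_mon2 false true) (homogeneous_mon2 true false).
have hvc : homogeneous (size s).+1 (vc * mon s).
  exact: homogeneousM homogeneous_vc (homogeneous_mon s).
have -> : vc * mon (rcons s x) = vc * mon s * mon [:: x].
  by rewrite -cats1 -mon_cat; exact: mulrA.
rewrite raddfD /= in IH.
rewrite der_word_rcons raddfD /= [X in X + _]raddfD /=.
rewrite [X in X + _ + _](Theta_mulr_letter _ _ _ (homogeneous_der_word _ _ hD)).
rewrite [X in _ + X](Theta_mulr_letter _ _ _ hvc) [X in _ + X + _]Theta_mon_mul_ab_ba.
have -> : Theta (der_word (fun=> va * vb + vb * va) (FMonom s))
          = qint 2 * qint (size s).+1 * Theta (mon s) - Theta (vc * mon s).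
  by rewrite -IH addrK.
rewrite [in RHS]Theta_mon_rcons size_rcons qint2.
case: x; rewrite ?theta_letter_a ?theta_letter_b.
- by rewrite (qintSl (size s).+1) !exprS; ring.
- by rewrite (qintSr (size s).+1) !exprS; ring.
Qed.

Theorem mainTheorem1 (n : nat) (w : ZAB) :
  homogeneous n w ->
  [/\ Theta (w * vc) = (1 + 'X^(n.+1)) * Theta w,
      Theta (Gder w) = 'X * qint n * Theta w,
      Theta (Pyr w) = qint (n.+2) * Theta w
    & Theta (Bipyr w) = qint 2 * qint (n.+1) * Theta w].
Proof.
move=> hw; have hvc := Theta_mulr_vc _ _ hw.
have hG : Theta (Gder w) = 'X * qint n * Theta w.
  have hGl : monomial_linear Gder by exact: monomial_linear_der.
  apply: (Theta_monomial_linear _ _ _ _ hGl hw).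
  by move=> s <-; apply: Theta_Gder_mon.
split => //.
- by rewrite /Pyr raddfD /= hG hvc qintSl qintSr !exprS; ring.
- have hBl : monomial_linear Bipyr.
    exact: monomial_linearD _ _ (monomial_linear_der _) (monomial_linear_mull vc).
  apply: (Theta_monomial_linear _ _ _ _ hBl hw).
  by move=> s <-; apply: Theta_Bipyr_mon.
Qed.
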